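(* Let $L$ be a finite geometric lattice, fix a total order on its set of atoms $A(L)$, and let $\lambda$ be the minimum labeling: for a cover $x\lessdot y$, $\lambda(x\lessdot y)$ is the smallest atom $a$ (in the fixed order) with $x\vee a=y$. Then $\lambda$ is an EW-labeling of $L$.
   Context: An E-labeling is a map $\lambda$ from the cover relations of $L$ to a poset $\Lambda$ (here the totally ordered set $A(L)$). Words of labels of saturated chains are read bottom to top; a chain is increasing if its word is strictly increasing and ascent-free if no two consecutive labels $a,b$ satisfy $a<b$. An ER-labeling is an E-labeling such that every closed interval has exactly one increasing maximal chain. Rank two switching property: for every saturated chain $\hat0=x_0\lessdot\cdots\lessdot x_k$ and every $i$ with $\lambda(x_{i-1}\lessdot x_i)<\lambda(x_i\lessdot x_{i+1})$ there is a unique $x_i'$ with $x_{i-1}\lessdot x_i'\lessdot x_{i+1}$, $\lambda(x_{i-1}\lessdot x_i')=\lambda(x_i\lessdot x_{i+1})$ and $\lambda(x_i'\lessdot x_{i+1})=\lambda(x_{i-1}\lessdot x_i)$. An EW-labeling is an ER-labeling with the rank two switching property such that in each interval distinct maximal chains have distinct words of labels. *)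

From mathcomp Require Import all_boot all_order.
Set Implicit Arguments. Unset Strict Implicit. Unset Printing Implicit Defensive.
Import Order.TTheory.
Local Open Scope order_scope.

Section GeomLattice.
Variables (disp : Order.disp_t) (L : finTBLatticeType disp).

Definition cover (x y : L) : bool := (x < y) && [forall z : L, ~~ ((x < z) && (z < y))].

Definition atom (a : L) : bool := cover \bot a.

Definition atomistic : Prop := forall x : L, x = \join_(a : L | atom a && (a <= x)) a.

Definition semimodular : Prop :=
  forall x y : L, cover (x `&` y) x -> cover y (x `|` y).

Definition geometric : Prop := atomistic /\ semimodular.

(* A total order on the atoms is given by an injective ranking ord on atoms:
   a precedes b iff ord a < ord b.  Labels are atoms; label order via ord. *)
Variable ord : L -> nat.
Variable lam : L -> L -> L.   (* lam x y = label of the cover x <. y *)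

Definition min_labeling : Prop :=
  forall x y : L, cover x y ->
    [/\ atom (lam x y), x `|` lam x y = y &
        forall a : L, atom a -> x `|` a = y -> (ord (lam x y) <= ord a)%N].

(* saturated chain x = x_0 <. x_1 <. ... <. x_k = last x s, coded by s *)
Definition sat_chain (x : L) (s : seq L) (y : L) : bool :=
  path cover x s && (last x s == y).

Definition word (x : L) (s : seq L) : seq L := pairmap lam x s.

Definition lab_lt (a b : L) : bool := (ord a < ord b)%N.

Definition increasing (w : seq L) : bool := sorted lab_lt w.

Definition ER_labeling : Prop :=
  forall x y : L, x <= y ->
    exists s, (sat_chain x s y && increasing (word x s)) /\
      forall t, sat_chain x t y && increasing (word x t) -> t = s.

Definition rank_two_switching : Prop :=
  forall (s : seq L) (i : nat), path cover \bot s -> (0 < i)%N -> (i < size s)%N ->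
    let c := \bot :: s in
    let xm := nth \bot c i.-1 in
    let xi := nth \bot c i in
    let xp := nth \bot c i.+1 in
    lab_lt (lam xm xi) (lam xi xp) ->
    exists x', [/\ cover xm x', cover x' xp, lam xm x' = lam xi xp
                 & lam x' xp = lam xm xi] /\
      forall z, [/\ cover xm z, cover z xp, lam xm z = lam xi xp
                 & lam z xp = lam xm xi] -> z = x'.

Definition distinct_words : Prop :=
  forall (x y : L) (s t : seq L), sat_chain x s y -> sat_chain x t y ->
    word x s = word x t -> s = t.

Definition EW_labeling : Prop :=
  [/\ ER_labeling, rank_two_switching & distinct_words].

End GeomLattice.

From Pilot Require Import Defs.
From mathcomp Require Import all_boot all_order.
Set Implicit Arguments. Unset Strict Implicit. Unset Printing Implicit Defensive.
Import Order.TTheory.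
Local Open Scope order_scope.
Local Notation cover := (@Defs.cover _ _).

(* The key observation is that the minimum label of x <. y is the least atom
   below y but not below x.  Greedily joining the least new atom therefore
   produces an increasing chain, and any increasing chain must begin with that
   step, which gives the ER property.  In a chain x <. x' <. y with labels
   a < b, the element x \/ b carries the labels b, a, and it is the only
   candidate because x <. z is recovered from its label as x \/ lam x z; this
   last fact also shows that a chain is determined by its word. *)

Section Covers.
Variables (disp : Order.disp_t) (L : finTBLatticeType disp).
Implicit Types (a c x y z : L) (t : seq L).

Lemma cover_lt x y : cover x y -> x < y.
Proof. by case/andP. Qed.

Lemma cover_lt_le_eq x y z : cover x y -> x < z -> z <= y -> z = y.
Proof.
case/andP=> _ /forallP /(_ z); rewrite negb_and => /orP[/negP//|/negP zy] xz.
by rewrite le_eqVlt => /orP[/eqP//|/zy].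
Qed.

Lemma cover_join_eq x y c : cover x y -> c <= y -> ~~ (c <= x) -> x `|` c = y.
Proof.
move=> cxy cy ncx; apply: (cover_lt_le_eq cxy).
  by rewrite lt_neqAle leUl andbT; apply: contra ncx => /eqP ->; rewrite leUr.
by rewrite leUx (ltW (cover_lt cxy)).
Qed.

Lemma cover_join_notle x y c : cover x y -> x `|` c = y -> ~~ (c <= x).
Proof.
move=> /cover_lt + xcy; apply: contraTN => cx.
by rewrite -xcy (join_l cx) ltxx.
Qed.

Lemma path_cover_le x t : path cover x t -> x <= last x t.
Proof.
elim: t x => [|y t IH] x //= /andP[cxy pt].
exact: le_trans (ltW (cover_lt cxy)) (IH _ pt).
Qed.

Lemma sat_chain_cons_lt x z t y : sat_chain x (z :: t) y -> x < y.
Proof.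
case/andP=> /= /andP[cxz pt] /eqP <-.
exact: lt_le_trans (cover_lt cxz) (path_cover_le pt).
Qed.

Lemma card_upset_lt x y :
  x < y -> (#|[pred z | (y <= z)%O]| < #|[pred z | (x <= z)%O]|)%N.
Proof.
move=> xy; apply/proper_card/properP; split.
  by apply/subsetP => z; rewrite !inE; exact/le_trans/ltW.
by exists x; rewrite !inE ?lexx ?lt_geF.
Qed.

Lemma atom_meet_eq0 a x : atom a -> ~~ (a <= x) -> a `&` x = \bot.
Proof.
move=> at_a nax; apply/eqP; apply: contraNT nax => ne0.
have lt0 : \bot < a `&` x by rewrite lt_neqAle eq_sym ne0 le0x.
by rewrite -(cover_lt_le_eq at_a lt0 (leIl a x)) leIr.
Qed.

Lemma atom_join_cover a x :
  semimodular L -> atom a -> ~~ (a <= x) -> cover x (x `|` a).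
Proof.
move=> sm at_a nax; rewrite joinC; apply: sm.
by rewrite (atom_meet_eq0 at_a nax).
Qed.

Lemma atomistic_exists_atom x y :
  atomistic L -> x < y -> exists a, [/\ atom a, a <= y & ~~ (a <= x)].
Proof.
move=> am xy; case: (pickP [pred a | [&& atom a, a <= y & ~~ (a <= x)]]).
  by move=> a /and3P[at_a ay nax]; exists a.
move=> noatom; suff yx : y <= x by rewrite (lt_geF xy) in yx.
rewrite (am y); apply/joinsP => a /andP[at_a ay].
by move: (noatom a); rewrite /= at_a ay /= => /negbFE.
Qed.

End Covers.

Section MinLabeling.
Variables (disp : Order.disp_t) (L : finTBLatticeType disp).
Variables (ord : L -> nat) (lam : L -> L -> L).
Hypothesis ord_inj : {in [pred a | atom a] &, injective ord}.
Hypothesis lamP : min_labeling ord lam.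
Implicit Types (a c x y z : L) (s t : seq L).

Lemma atom_label x y : cover x y -> atom (lam x y).
Proof. by case/lamP. Qed.

Lemma join_label x y : cover x y -> x `|` lam x y = y.
Proof. by case/lamP. Qed.

Lemma label_le x y : cover x y -> lam x y <= y.
Proof. by move=> cxy; rewrite -[leRHS](join_label cxy) leUr. Qed.

Lemma label_notle x y : cover x y -> ~~ (lam x y <= x).
Proof. by move=> cxy; exact: cover_join_notle cxy (join_label cxy). Qed.

Lemma label_min x y c :
  cover x y -> atom c -> c <= y -> ~~ (c <= x) -> (ord (lam x y) <= ord c)%N.
Proof.
by move=> cxy at_c cy ncx; case: (lamP cxy) => _ _ -> //; exact: cover_join_eq.
Qed.

Lemma ord_atom_eq a c :
  atom a -> atom c -> (ord a <= ord c)%N -> (ord c <= ord a)%N -> a = c.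
Proof.
by move=> at_a at_c ac ca; apply: ord_inj; rewrite ?inE //; apply/eqP; rewrite eqn_leq ac.
Qed.

Lemma label_eq x y c :
  cover x y -> atom c -> c <= y -> ~~ (c <= x) ->
  (forall d, atom d -> d <= y -> ~~ (d <= x) -> (ord c <= ord d)%N) -> lam x y = c.
Proof.
move=> cxy at_c cy ncx cmin.
apply: ord_atom_eq (atom_label cxy) at_c (label_min cxy at_c cy ncx) _.
by apply: cmin; rewrite ?atom_label ?label_le ?label_notle.
Qed.

Lemma min_label_distinct_words : distinct_words lam.
Proof.
move=> x y s; elim: s x => [|z s IH] x [|z' t] //=.
rewrite /sat_chain /word /= => /andP[/andP[cxz ps] ls] /andP[/andP[cxz' pt] lt] [lzz' w].
have zz' : z = z' by rewrite -(join_label cxz) -(join_label cxz') lzz'.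
by subst z'; congr (_ :: _); apply: (IH z); rewrite /sat_chain ?ps ?pt.
Qed.

Lemma label_le_last x z s : cover x z -> path cover z s -> lam x z <= last z s.
Proof. by move=> cxz pzs; exact: le_trans (label_le cxz) (path_cover_le pzs). Qed.

Section Semimodular.
Hypothesis sm : semimodular L.

Lemma label_switch xm xi xp :
  cover xm xi -> cover xi xp -> lab_lt ord (lam xm xi) (lam xi xp) ->
  exists x', [/\ cover xm x', cover x' xp, lam xm x' = lam xi xp
               & lam x' xp = lam xm xi] /\
    forall z, [/\ cover xm z, cover z xp, lam xm z = lam xi xp
               & lam z xp = lam xm xi] -> z = x'.
Proof.
move=> c1 c2 ab.
set a := lam xm xi in ab *; set b := lam xi xp in ab *.
have [mi ip] := (ltW (cover_lt c1), ltW (cover_lt c2)).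
have bp : b <= xp := label_le c2.
have nbi : ~~ (b <= xi) := label_notle c2.
have ai : a <= xi := label_le c1.
have nbm : ~~ (b <= xm) by apply: contra nbi => /le_trans; apply.
pose x' := xm `|` b.
have c3 : cover xm x' := atom_join_cover sm (atom_label c2) nbm.
have x'p : x' <= xp by rewrite leUx (le_trans mi ip) bp.
(* Any atom below x' but not below xm spans x' over xm, so it cannot lie below xi. *)
have notle_xi d : d <= x' -> ~~ (d <= xm) -> ~~ (d <= xi).
  move=> dx' ndm; apply/negP => di.
  have x'i : x' = xi by rewrite -(cover_join_eq c3 dx' ndm) (cover_join_eq c1 di ndm).
  by move: nbi; rewrite -x'i /x' leUr.
have nax' : ~~ (a <= x').
  by apply/negP => ax'; move: (notle_xi a ax' (label_notle c1)); rewrite ai.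
have j4 : x' `|` a = xp by rewrite /x' joinAC join_label // join_label.
have c4 : cover x' xp by rewrite -j4; exact: atom_join_cover sm (atom_label c1) nax'.
have l3 : lam xm x' = b.
  apply: label_eq; rewrite ?atom_label ?leUr //.
  move=> d at_d dx' ndm; apply: label_min c2 at_d (le_trans dx' x'p) _.
  exact: notle_xi.
have l4 : lam x' xp = a.
  apply: label_eq; rewrite ?atom_label ?(le_trans ai ip) //.
  move=> d at_d dp ndx'.
  have ndm : ~~ (d <= xm) by apply: contra ndx' => /le_trans; apply; rewrite leUl.
  have [di|ndi] := boolP (d <= xi); first exact: label_min c1 at_d di ndm.
  exact: ltnW (leq_trans ab (label_min c2 at_d dp ndi)).
exists x'; split=> // z [cz _ lz _].
by rewrite -(join_label cz) lz.
Qed.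

Lemma min_label_rank_two_switching : rank_two_switching ord lam.
Proof.
move=> s [|i] ps // _ isz /=.
exact: label_switch ((pathP \bot ps) i (ltnW isz)) ((pathP \bot ps) i.+1 isz).
Qed.

Lemma increasing_chain_first_label_min x z s c :
  cover x z -> path cover z s -> increasing ord (word lam x (z :: s)) ->
  atom c -> c <= last z s -> ~~ (c <= x) -> (ord (lam x z) <= ord c)%N.
Proof.
elim: s x z => [|z2 s IH] x z cxz pzs inc at_c cl ncx.
  exact: label_min.
have [cz|ncz] := boolP (c <= z); first exact: label_min.
move: pzs inc => /= /andP[czz2 pz2s]; rewrite /increasing /word /= => /andP[lt12 inc].
exact: leq_trans (ltnW lt12) (IH z z2 czz2 pz2s inc at_c cl ncz).
Qed.

Lemma increasing_chain_unique x y s t :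
  sat_chain x s y -> increasing ord (word lam x s) ->
  sat_chain x t y -> increasing ord (word lam x t) -> s = t.
Proof.
elim: s x t => [|z s IH] x [|z' t] //.
- by move=> /andP[_ /eqP <-] _ /sat_chain_cons_lt; rewrite ltxx.
- by move=> /sat_chain_cons_lt xy _ /andP[_ /eqP /= yx]; rewrite yx ltxx in xy.
move=> /andP[/= /andP[cxz ps] /eqP ls] incs /andP[/= /andP[cxz' pt] /eqP lt] inct.
have ll : last z s = last z' t by rewrite ls lt.
have same_label : lam x z = lam x z'.
  apply: ord_atom_eq; rewrite ?atom_label //.
  - apply: (increasing_chain_first_label_min cxz ps incs);
      by rewrite ?atom_label ?label_notle // ll label_le_last.
  - apply: (increasing_chain_first_label_min cxz' pt inct);
      by rewrite ?atom_label ?label_notle // -ll label_le_last.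
have zz' : z = z' by rewrite -(join_label cxz) same_label join_label.
subst z'; congr (_ :: _); apply: IH (path_sorted inct).
- by rewrite /sat_chain ps ls eqxx.
- exact: path_sorted incs.
- by rewrite /sat_chain pt lt eqxx.
Qed.

Lemma increasing_chain_exists x y : atomistic L -> x <= y ->
  exists s, sat_chain x s y && increasing ord (word lam x s).
Proof.
move=> am; have [n] := ubnP #|[pred z | x <= z]|.
elim: n x => // n IH x ltn; rewrite le_eqVlt => /predU1P[<-|xy].
  by exists [::]; rewrite /sat_chain /= eqxx.
pose P a := [&& atom a, a <= y & ~~ (a <= x)].
have [a0 [at_a0 a0y na0x]] := atomistic_exists_atom am xy.
have Pa0 : P a0 by rewrite /P at_a0 a0y.
have [a /and3P[at_a ay nax] amin] := arg_minnP ord Pa0.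
pose x1 := x `|` a.
have cxx1 : cover x x1 := atom_join_cover sm at_a nax.
have x1y : x1 <= y by rewrite leUx (ltW xy) ay.
have ltn1 := leq_trans (card_upset_lt (cover_lt cxx1)) ltn.
have [s /andP[/andP[ps ls] inc]] := IH x1 ltn1 x1y.
have la : lam x x1 = a.
  apply: label_eq; rewrite ?leUr // => d at_d dx1 ndx.
  by apply: amin; rewrite /P at_d ndx (le_trans dx1 x1y).
exists (x1 :: s); rewrite /sat_chain /increasing /word /= cxx1 ps ls /= la.
case: s ps ls inc => [|x2 s] //= /andP[cx12 ps] ls inc; rewrite inc andbT.
have nbx1 := label_notle cx12.
have nbx : ~~ (lam x1 x2 <= x) by apply: contra nbx1 => /le_trans; apply; rewrite leUl.
have ab : (ord a <= ord (lam x1 x2))%N.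
  by apply: amin; rewrite /P atom_label // nbx -(eqP ls) label_le_last.
rewrite /lab_lt ltn_neqAle ab andbT; apply: contra nbx1 => /eqP oab.
by rewrite -(ord_inj _ _ oab) ?inE ?atom_label ?leUr.
Qed.

Lemma min_label_ER : atomistic L -> ER_labeling ord lam.
Proof.
move=> am x y xy; have [s /andP[chs incs]] := increasing_chain_exists am xy.
exists s; split=> [|t /andP[cht inct]]; first by rewrite chs.
exact: increasing_chain_unique cht inct chs incs.
Qed.

End Semimodular.

End MinLabeling.

Theorem proposition5p3 (disp : Order.disp_t) (L : finTBLatticeType disp)
  (ord : L -> nat) (lam : L -> L -> L) :
  geometric L ->
  {in [pred a | atom a] &, injective ord} ->
  min_labeling ord lam ->
  EW_labeling ord lam.
Proof.
move=> [am sm] ord_inj lamP; split.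
- exact: min_label_ER ord_inj lamP sm am.
- exact: min_label_rank_two_switching ord_inj lamP sm.
- exact: min_label_distinct_words lamP.
Qed.
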